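(* Let $G$ be a finite abelian group, $T \subsetneq G$ a non-empty subset, and fix $x \in G$ with $T + x \ne T$. Put $T^{\uparrow} = T + x$, $C^{\uparrow} = T^{\uparrow}\setminus T$, $C^{\downarrow} = T \setminus T^{\uparrow}$ and $A = T \cup T^{\uparrow}$. Let $d \ge 1$ and let $X$ be a hole in $A^d$. Suppose that $C_{i,d} \subset X$ for some $0 \le i \le d$. Then $(X \setminus C_{i,d})^{\dagger}$ is a hole in $A^{d+1}$.
   Context: For integers $1 \le i \le e$, $C_{i,e} = C^{\downarrow}\times\dots\times C^{\uparrow}\times\dots\times C^{\downarrow} \subset A^e$ ($e$ factors, $C^{\uparrow}$ in the $i$-th factor, $C^{\downarrow}$ elsewhere), and $C_{0,e} = (C^{\downarrow})^e$. A copy of $T$ in $G^e$ is a translate $\mathsf{T}_j + y$ ($y\in G^e$, $1\le j\le e$), where $\mathsf{T}_j$ is the set of points of $G^e$ with $j$-th coordinate in $T$ and other coordinates $0$; a set is $T$-tilable if it is a disjoint union of copies of $T$. A set $X \subset A^e$ is a hole in $A^e$ if $A^e \setminus X$ is $T$-tilable. For $X \subset A^e$, define $X^{\dagger} = (X \times C^{\downarrow}) \cup C_{e+1,e+1} \subset A^{e+1}$. *)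

From mathcomp Require Import all_boot all_order all_algebra.
Set Implicit Arguments. Unset Strict Implicit. Unset Printing Implicit Defensive.
Import GRing.Theory.
Local Open Scope ring_scope.

Section Tiling.
Variable G : finZmodType.
Variables (T : {set G}) (x : G).

Definition pt (e : nat) := {ffun 'I_e -> G}.

Definition Tup : {set G} := [set t + x | t in T].
Definition Cup : {set G} := Tup :\: T.
Definition Cdown : {set G} := T :\: Tup.
Definition Aset : {set G} := T :|: Tup.

Definition Apow (e : nat) : {set pt e} := [set y : pt e | [forall k, y k \in Aset]].

(* C_{i,e}: coordinates are 1-based in the paper; the 0-based ordinal k is the
   (k+1)-th coordinate.  For i = 0 (or no matching k) this is (C^down)^e. *)
Definition Cset (i e : nat) : {set pt e} :=
  [set y : pt e | [forall k : 'I_e,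
     y k \in (if (k.+1 == i)%N then Cup else Cdown)]].

Definition Tj (e : nat) (j : 'I_e) : {set pt e} :=
  [set z : pt e | (z j \in T) && [forall k, (k != j) ==> (z k == 0)]].

Definition translate (e : nat) (z y : pt e) : pt e := [ffun k => z k + y k].

Definition copy (e : nat) (S : {set pt e}) : Prop :=
  exists (j : 'I_e) (y : pt e), S = [set translate z y | z in Tj j].

Definition tilable (e : nat) (S : {set pt e}) : Prop :=
  exists P : {set {set pt e}},
    [/\ forall B, B \in P -> copy B, trivIset P & cover P = S].

Definition hole (e : nat) (X : {set pt e}) : Prop :=
  X \subset Apow e /\ tilable (Apow e :\: X).

(* (y, g) in G^e x G viewed as a point of G^(e+1), g the last coordinate *)
Definition ext (e : nat) (y : pt e) (g : G) : pt e.+1 :=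
  [ffun k : 'I_e.+1 => if unlift ord_max k is Some k' then y k' else g].

Definition dagger (e : nat) (X : {set pt e}) : {set pt e.+1} :=
  [set ext y g | y in X, g in Cdown] :|: Cset e.+1 e.+1.

End Tiling.

(* Split A^(d+1) along the last coordinate g, which lies in exactly one of
   C^down, T :&: T^up and C^up.  With C = C_(i,d), the complement of
   (X \ C)^dagger in A^(d+1) is
     (A^d \ X) x C^down  u  (A^d \ C) x (T :&: T^up)
       u  (A^d \ (C^down)^d) x C^up  u  C x T.
   The first three pieces are layers over tilable subsets of A^d: A^d \ X is
   tilable because X is a hole, and A^e \ C_(j,e) is tilable for every j by
   induction on e, since A \ C^up = T and A \ C^down = T + x are copies of T in
   the last coordinate.  The last piece is the union of the copies {y} x T. *)

From mathcomp Require Import all_boot all_order all_algebra.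
Set Implicit Arguments. Unset Strict Implicit. Unset Printing Implicit Defensive.
Import GRing.Theory.
Local Open Scope ring_scope.

Lemma disjointsU (U : finType) (A B C : {set U}) :
  [disjoint A :|: B & C] = [disjoint A & C] && [disjoint B & C].
Proof. by rewrite -!setI_eq0 setIUl setU_eq0. Qed.

Lemma disjointDl (U : finType) (A B : {set U}) : [disjoint A :\: B & B].
Proof. by rewrite disjoints_subset setDE subsetIr. Qed.

Lemma forall_ord_max e (P : pred 'I_e.+1) :
  [forall k, P k] = P ord_max && [forall k, P (lift ord_max k)].
Proof.
apply/forallP/andP => [PP|[Pmax /forallP Plift] k].
  by split => //; apply/forallP.
by case: (unliftP ord_max k) => [k' ->|->].
Qed.

Section Tilings.
Variables (G : finZmodType) (T : {set G}) (x : G).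

Definition init_pt e (z : pt G e.+1) : pt G e := [ffun k => z (lift ord_max k)].

Lemma ext_lift e (y : pt G e) g k : ext y g (lift ord_max k) = y k.
Proof. by rewrite ffunE liftK. Qed.

Lemma ext_max e (y : pt G e) g : ext y g ord_max = g.
Proof. by rewrite ffunE unlift_none. Qed.

Lemma ext_init e (z : pt G e.+1) : ext (init_pt z) (z ord_max) = z.
Proof.
apply/ffunP => k; case: (unliftP ord_max k) => [k' ->|->].
  by rewrite ext_lift ffunE.
by rewrite ext_max.
Qed.

Lemma ext_inj e (y y' : pt G e) g g' : ext y g = ext y' g' -> y = y' /\ g = g'.
Proof.
move=> E; split; last by rewrite -(ext_max y g) E ext_max.
by apply/ffunP => k; rewrite -(ext_lift y g) E ext_lift.
Qed.

Lemma ext_setP e (A B : {set pt G e.+1}) :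
  (forall y g, (ext y g \in A) = (ext y g \in B)) -> A = B.
Proof. by move=> AB; apply/setP => z; rewrite -(ext_init z) AB. Qed.

Lemma translate_ext e (z y : pt G e) h g :
  translate (ext z h) (ext y g) = ext (translate z y) (h + g).
Proof.
apply/ffunP => k; case: (unliftP ord_max k) => [k' ->|->].
  by rewrite !ffunE !liftK ffunE.
by rewrite !ffunE !unlift_none.
Qed.

Definition extX e (Q : {set pt G e}) (R : {set G}) : {set pt G e.+1} :=
  [set ext y g | y in Q, g in R].

Lemma mem_extX e (Q : {set pt G e}) R y g :
  (ext y g \in extX Q R) = (y \in Q) && (g \in R).
Proof.
apply/imset2P/andP => [[y' g' Qy' Rg' /ext_inj[-> ->]]|[Qy Rg]] //.
by exists y g.
Qed.

Lemma extX_disjoint e (Q1 Q2 : {set pt G e}) (R1 R2 : {set G}) :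
  [disjoint Q1 & Q2] || [disjoint R1 & R2] ->
  [disjoint extX Q1 R1 & extX Q2 R2].
Proof.
move=> dis; rewrite -setI_eq0; apply/eqP; apply: ext_setP => y g.
rewrite in_setI !mem_extX in_set0.
case/orP: dis => /disjointFr dis.
  by case Q1y: (y \in Q1); rewrite ?(dis _ Q1y) ?andbF.
by case R1g: (g \in R1); rewrite ?(dis _ R1g) ?andbF.
Qed.

Lemma extX_setD e (Q1 Q2 : {set pt G e}) (R1 R2 : {set G}) : Q2 \subset Q1 ->
  extX Q1 R1 :\: extX Q2 R2 = extX (Q1 :\: Q2) R1 :|: extX Q2 (R1 :\: R2).
Proof.
move=> /subsetP sQ; apply: ext_setP => y g.
rewrite !(in_setD, in_setU, mem_extX); move: (sQ y).
by case: (y \in Q1); case: (y \in Q2); case: (g \in R1); case: (g \in R2) => // ->.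
Qed.

Lemma extX_bigcupl e (Q : {set pt G e}) R :
  extX Q R = \bigcup_(y in Q) extX [set y] R.
Proof.
apply: ext_setP => y g; rewrite mem_extX.
apply/andP/bigcupP => [[Qy Rg]|[y' Qy']].
  by exists y; rewrite ?mem_extX ?set11.
by rewrite mem_extX in_set1 => /andP[/eqP-> ->].
Qed.

Lemma extX_bigcupr e (Q : {set pt G e}) R :
  extX Q R = \bigcup_(g in R) extX Q [set g].
Proof.
apply: ext_setP => y g; rewrite mem_extX.
apply/andP/bigcupP => [[Qy Rg]|[g' Rg']].
  by exists g; rewrite ?mem_extX ?set11 ?andbT.
by rewrite mem_extX in_set1 => /andP[-> /eqP->].
Qed.

Lemma Apow_S e : Apow T x e.+1 = extX (Apow T x e) (Aset T x).
Proof.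
apply: ext_setP => y g; rewrite mem_extX !inE forall_ord_max ext_max andbC !inE.
by congr (_ && _); apply: eq_forallb => k; rewrite ext_lift.
Qed.

Lemma Cset_S j e : Cset T x j e.+1 =
  extX (Cset T x j e) (if (e.+1 == j)%N then Cup T x else Cdown T x).
Proof.
apply: ext_setP => y g; rewrite mem_extX !inE forall_ord_max ext_max andbC.
by congr (_ && _); apply: eq_forallb => k; rewrite ext_lift lift_max.
Qed.

Lemma Cset_sub_Apow j e : Cset T x j e \subset Apow T x e.
Proof.
apply/subsetP => y; rewrite !inE => /forallP Cy; apply/forallP => k.
by move: (Cy k); case: ifP => _; rewrite !inE => /andP[_ ->]; rewrite ?orbT.
Qed.

Lemma Tj_lift e (j : 'I_e) : Tj T (lift ord_max j) = extX (Tj T j) [set 0].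
Proof.
apply: ext_setP => y g; rewrite mem_extX !inE ext_lift forall_ord_max.
rewrite ext_max neq_lift eq_sym /= -andbA; congr (_ && _); rewrite andbC.
by congr (_ && _); apply: eq_forallb => k; rewrite ext_lift (inj_eq lift_inj).
Qed.

Lemma Tj_max e : Tj T (@ord_max e) = extX [set [ffun=> 0]] T.
Proof.
apply: ext_setP => y g; rewrite mem_extX !inE ext_max forall_ord_max eqxx /=.
rewrite andbC; congr (_ && _); apply/forallP/eqP => [y0|-> k].
  by apply/ffunP => k; move: (y0 k); rewrite ext_lift eq_sym neq_lift ffunE => /eqP.
by rewrite ext_lift ffunE eqxx implybT.
Qed.

Lemma tilable_set0 e : tilable T (set0 : {set pt G e}).
Proof.
exists set0; split => [B||]; first by rewrite inE.
  by rewrite /trivIset /cover !big_set0 cards0.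
by rewrite /cover big_set0.
Qed.

Lemma tilableU e (S1 S2 : {set pt G e}) :
  tilable T S1 -> tilable T S2 -> [disjoint S1 & S2] -> tilable T (S1 :|: S2).
Proof.
move=> [P1 [cP1 tP1 <-]] [P2 [cP2 tP2 <-]] dis; exists (P1 :|: P2); split.
- by move=> B /setUP[]; [apply: cP1 | apply: cP2].
- exact: trivIsetU.
- by rewrite /cover bigcup_setU.
Qed.

Lemma tilable_bigcup e (I : finType) (J : {set I}) (F : I -> {set pt G e}) :
  (forall i, i \in J -> tilable T (F i)) ->
  {in J &, forall i j, i != j -> [disjoint F i & F j]} ->
  tilable T (\bigcup_(i in J) F i).
Proof.
have [n] := ubnP #|J|; elim: n J => // n IH J ltJn tF dF.
have [->|/set0Pn[a Ja]] := eqVneq J set0.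
  by rewrite big_set0; apply: tilable_set0.
rewrite -(setD1K Ja) bigcup_setU big_set1; apply: tilableU; first exact: tF.
- apply: IH => [|i /setD1P[_]|i j /setD1P[_ Ji] /setD1P[_ Jj]]; last exact: dF.
    by rewrite (cardsD1 a) Ja add1n ltnS in ltJn.
  exact: tF.
- by apply: bigcup_disjoint => i /setD1P[ia Ji]; apply: dF; rewrite // eq_sym.
Qed.

Lemma tilable_imset e e' (f : pt G e -> pt G e') (S : {set pt G e}) :
  injective f -> (forall B, copy T B -> copy T (f @: B)) ->
  tilable T S -> tilable T (f @: S).
Proof.
move=> injf copyf [P [cP tP <-]]; exists [set f @: (B : {set pt G e}) | B in P].
split; last by rewrite cover_imset -imset_cover.
- by move=> _ /imsetP[B PB ->]; apply/copyf/cP.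
- by rewrite (imset_trivIset _ injf).
Qed.

Lemma copy_ext_layer e (B : {set pt G e}) (g : G) :
  copy T B -> copy T [set ext y g | y in B].
Proof.
case=> j [y ->]; exists (lift ord_max j), (ext y g).
rewrite Tj_lift /extX imset2_set1r -!imset_comp; apply: eq_imset => z /=.
by rewrite translate_ext add0r.
Qed.

Lemma copy_ext_shift e (y : pt G e) c : copy T (ext y @: [set t + c | t in T]).
Proof.
exists ord_max, (ext y c).
rewrite Tj_max /extX imset2_set1l -!imset_comp; apply: eq_imset => t /=.
by rewrite translate_ext; congr ext; apply/ffunP => k; rewrite !ffunE add0r.
Qed.

Lemma tilable_extX e (Q : {set pt G e}) R : tilable T Q -> tilable T (extX Q R).
Proof.
move=> tQ; rewrite extX_bigcupr; apply: tilable_bigcup => [g _|g g' _ _ gg'].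
  rewrite /extX imset2_set1r; apply: tilable_imset => // [y y' /ext_inj[]//|B].
  exact: copy_ext_layer.
by apply: extX_disjoint; rewrite disjoints1 in_set1 gg' orbT.
Qed.

Lemma tilable_extX_shift e (Q : {set pt G e}) c :
  tilable T (extX Q [set t + c | t in T]).
Proof.
rewrite extX_bigcupl; apply: tilable_bigcup => [y _|y y' _ _ yy'].
  exists [set extX [set y] [set t + c | t in T]]; split.
  - by move=> B /set1P->; rewrite /extX imset2_set1l; apply: copy_ext_shift.
  - exact: trivIset1.
  - exact: cover1.
by apply: extX_disjoint; rewrite disjoints1 in_set1 yy'.
Qed.

Lemma imset_addr0 (A : {set G}) : [set a + 0 | a in A] = A.
Proof. by rewrite (eq_imset _ (@addr0 G)) imset_id. Qed.

Lemma Aset_setD_Cup : Aset T x :\: Cup T x = T.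
Proof. by apply/setP => g; rewrite !inE; case: (g \in T); case: (g \in Tup T x). Qed.

Lemma Aset_setD_Cdown : Aset T x :\: Cdown T x = Tup T x.
Proof. by apply/setP => g; rewrite !inE; case: (g \in T); case: (g \in Tup T x). Qed.

Lemma disjoint_last_coords :
  [/\ [disjoint Cdown T x & T :&: Tup T x], [disjoint Cdown T x & Cup T x],
      [disjoint T :&: Tup T x & Cup T x] & [disjoint Cup T x & T]].
Proof.
by split; rewrite -setI_eq0; apply/eqP/setP => g; rewrite !inE;
  case: (g \in T); case: (g \in Tup T x).
Qed.

Lemma tilable_Apow_setD_Cset j e : tilable T (Apow T x e :\: Cset T x j e).
Proof.
elim: e => [|e IH].
  suff /eqP-> : Apow T x 0 :\: Cset T x j 0 == set0 by apply: tilable_set0.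
  by rewrite setD_eq0; apply/subsetP => y _; rewrite inE; apply/forallP => -[].
rewrite Apow_S Cset_S extX_setD ?Cset_sub_Apow //.
set S := if _ then _ else _.
have [c ->] : exists c, Aset T x :\: S = [set t + c | t in T].
  rewrite /S; case: ifP => _; first by exists 0; rewrite imset_addr0 Aset_setD_Cup.
  by exists x; rewrite Aset_setD_Cdown.
apply: tilableU; [exact: tilable_extX | exact: tilable_extX_shift |].
by apply: extX_disjoint; rewrite disjointDl.
Qed.

Lemma Apow_setD_dagger d (X C : {set pt G d}) :
  C \subset X -> X \subset Apow T x d ->
  Apow T x d.+1 :\: dagger T x (X :\: C) =
  extX (Apow T x d :\: X) (Cdown T x) :|: extX (Apow T x d :\: C) (T :&: Tup T x)
  :|: extX (Apow T x d :\: Cset T x d.+1 d) (Cup T x) :|: extX C T.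
Proof.
move=> /subsetP sCX /subsetP sXA; apply: ext_setP => y g.
have yCX : (y \in C) ==> (y \in X) by apply/implyP/sCX.
have yXA : (y \in X) ==> (y \in Apow T x d) by apply/implyP/sXA.
have yC0A : (y \in Cset T x d.+1 d) ==> (y \in Apow T x d).
  by apply/implyP/subsetP/Cset_sub_Apow.
rewrite /dagger Cset_S eqxx Apow_S !(in_setD, in_setU, mem_extX).
rewrite /Aset /Cup /Cdown !(in_setD, in_setU, in_setI); move: yCX yXA yC0A.
by case: (y \in C); case: (y \in X); case: (y \in Apow T x d);
  case: (y \in Cset T x d.+1 d); case: (g \in T); case: (g \in Tup T x).
Qed.

End Tilings.

Theorem proposition11 (G : finZmodType) (T : {set G}) (x : G)
  (hT0 : T != set0) (hTG : T \proper [set: G]) (hx : Tup T x != T)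
  (d : nat) (hd : (1 <= d)%N) (X : {set pt G d})
  (hX : hole T x X) (i : nat) (hi : (i <= d)%N)
  (hC : Cset T x i d \subset X) :
  hole T x (dagger T x (X :\: Cset T x i d)).
Proof.
(* Only C_(i,d) \subset X \subset A^d is used. *)
case: hX => sXA tilX; split.
  rewrite /dagger subUset Cset_sub_Apow andbT Apow_S; apply: imset2S.
    exact: subset_trans (subsetDl _ _) sXA.
  exact: subset_trans (subsetDl _ _) (subsetUl _ _).
have [dDTT dDU dTTU dUT] := disjoint_last_coords T x.
rewrite Apow_setD_dagger //.
apply: tilableU; first apply: tilableU; first apply: tilableU.
- exact: tilable_extX.
- exact/tilable_extX/tilable_Apow_setD_Cset.
- by apply: extX_disjoint; rewrite dDTT orbT.
- exact/tilable_extX/tilable_Apow_setD_Cset.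
- by rewrite disjointsU !extX_disjoint ?dDU ?dTTU ?orbT.
- by rewrite -[R in extX _ R]imset_addr0; apply: tilable_extX_shift.
rewrite !disjointsU !extX_disjoint //.
- by rewrite dUT orbT.
- by rewrite disjointDl.
- by rewrite (disjointWr hC) ?disjointDl.
Qed.
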